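(* Let $N\ge2$, $M\ge1$, $k\ge0$. There exist constants $C_0,\dots,C_k>0$, depending only on $N,M,k$, such that for every unit vector $\psi\in\mathcal H_M$, $$\mathcal W_k(|\psi\rangle\langle\psi|)=\sum_{\ell=0}^k C_\ell\,\mathcal T^\ell\big(\gamma^{(k-\ell)}_\psi\big),$$ where here $\mathcal T^\ell$ acts on operators on $\mathcal H_{k-\ell}$ (i.e. $\mathcal T^\ell(\Gamma)=\frac{k!}{(k-\ell)!}P_{k}(I_{\mathbb C^N}^{\otimes \ell}\otimes\Gamma)P_{k}$ for $\Gamma$ on $\mathcal H_{k-\ell}$).
   Context: $\mathcal H_n=P_n(\mathbb C^N)^{\otimes n}$ is the totally symmetric subspace, $P_n$ the symmetrizing projection. On the bosonic Fock space $\bigoplus_n\mathcal H_n$, $a^*(v)\phi=\sqrt{n+1}P_{n+1}(v\otimes\phi)$ for $\phi\in\mathcal H_n$, $a(v)=a^*(v)^*$, $a_i=a(e_i)$ for an orthonormal basis $(e_i)$ of $\mathbb C^N$. $\mathcal W_k(\Gamma)=\frac1{k!}\sum_{i_1,\dots,i_k}\sum_{j_1,\dots,j_k}\mathrm{Tr}_{\mathcal H_M}(\Gamma\,a_{i_1}\cdots a_{i_k}a^*_{j_k}\cdots a^*_{j_1})\,a^*_{i_1}\cdots a^*_{i_k}a_{j_k}\cdots a_{j_1}$ restricted to $\mathcal H_k$. For a unit vector $\psi\in\mathcal H_M$ and $0\le j\le M$, the $j$-particle reduced density matrix is the operator on $\mathcal H_j$ given by $\gamma^{(j)}_\psi=\frac{M!}{(M-j)!}\mathrm{Tr}_{M-j}|\psi\rangle\langle\psi|$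 (partial trace over the last $M-j$ tensor factors), so $\mathrm{Tr}\,\gamma^{(j)}_\psi=\frac{M!}{(M-j)!}$ and $\gamma^{(0)}_\psi=1$; for $j>M$, $\gamma^{(j)}_\psi=0$. *)

(* Finite-dimensional bosonic Fock space over C^N, with
   complex scalars modelled by algC.  Vectors of (C^N)^{(x)n} are functions on
   words (seq 'I_N), operators are kernels seq 'I_N -> seq 'I_N -> algC; the
   tensor level n at which a kernel/vector is used is given explicitly (sums
   range over n.-tuple 'I_N, i.e. over the standard basis e_{x_1}(x)...(x)e_{x_n}). *)
From HB Require Import structures.
From mathcomp Require Import all_boot all_order all_algebra all_fingroup all_field.
Set Implicit Arguments. Unset Strict Implicit. Unset Printing Implicit Defensive.
Import Order.TTheory GRing.Theory Num.Theory.
Local Open Scope ring_scope.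

Section Fock.
Variable N : nat.

Definition vect := seq 'I_N -> algC.
Definition kern := seq 'I_N -> seq 'I_N -> algC.

Definition idk : kern := fun x y => (x == y)%:R.

Definition comp (l : nat) (A B : kern) : kern :=
  fun x z => \sum_(y : l.-tuple 'I_N) A x y * B y z.

Definition apply (n : nat) (A : kern) (phi : vect) : vect :=
  fun x => \sum_(y : n.-tuple 'I_N) A x y * phi y.

Definition tr (n : nat) (A : kern) : algC := \sum_(x : n.-tuple 'I_N) A x x.

Definition symT (n : nat) (x y : n.-tuple 'I_N) : algC :=
  (n`!%:R)^-1 * \sum_(s : 'S_n) (x == [tuple tnth y (s i) | i < n])%:R.
Definition sym (n : nat) : kern := fun x y =>
  match (insub x : option (n.-tuple 'I_N)), (insub y : option (n.-tuple 'I_N)) with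
  | Some tx, Some ty => symT tx ty
  | _, _ => 0
  end.

(* trace over the symmetric subspace H_n: Tr(P_n X P_n) *)
Definition trH (n : nat) (X : kern) : algC := tr n (comp n (sym n) (comp n X (sym n))).

Definition symH (n : nat) (phi : vect) : Prop :=
  forall x : n.-tuple 'I_N, apply n (sym n) phi x = phi x.

Definition unitH (M : nat) (psi : vect) : Prop :=
  symH M psi /\ \sum_(x : M.-tuple 'I_N) psi x * (psi x)^* = 1.

(* creation a^*_j : H_n -> H_{n+1},  phi |-> sqrt(n+1) P_{n+1}(e_j (x) phi) *)
Definition ad (j : 'I_N) (n : nat) : kern :=
  fun x y => sqrtC (n.+1)%:R * sym n.+1 x (j :: y).
Definition an (j : 'I_N) (n : nat) : kern := fun y x => (ad j n x y)^*.

(* Cr [:: j1; ..; jk] m = a^*_{jk} ... a^*_{j1} : level m -> level m+k *)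
Fixpoint Cr (js : seq 'I_N) (m : nat) : kern :=
  match js with
  | [::] => idk
  | j :: js' => comp m.+1 (Cr js' m.+1) (ad j m)
  end.
(* An [:: i1; ..; ik] m = a_{i1} ... a_{ik} : level m+k -> level m *)
Fixpoint An (ids : seq 'I_N) (m : nat) : kern :=
  match ids with
  | [::] => idk
  | i :: ids' => comp m.+1 (an i m) (An ids' m.+1)
  end.

Definition proj (psi : vect) : kern := fun x y => psi x * (psi y)^*.

Definition W (M k : nat) (G : kern) : kern := fun x y =>
  (k`!%:R)^-1 * \sum_(i : k.-tuple 'I_N) \sum_(j : k.-tuple 'I_N)
    trH M (comp M G (comp (M + k) (An i M) (Cr j M)))
    * comp 0 (Cr (rev i) 0) (An (rev j) 0) x y.

(* j-particle reduced density matrix: (M!/(M-j)!) Tr_{M-j} |psi><psi|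
   (partial trace over the last M-j factors; equals 0 when j > M) *)
Definition gamma (M j : nat) (psi : vect) : kern := fun x y =>
  (M ^_ j)%:R * \sum_(w : M.-tuple 'I_N) \sum_(z : M.-tuple 'I_N)
     ((take j w == x) && (take j z == y) && (drop j w == drop j z))%:R
     * psi w * (psi z)^*.

Definition tensI (l : nat) (G : kern) : kern := fun x y =>
  (take l x == take l y)%:R * G (drop l x) (drop l y).
Definition T (k l : nat) (G : kern) : kern :=
  fun x y => (k`!%:R / (k - l)`!%:R) * comp k (sym k) (comp k (tensI l G) (sym k)) x y.

End Fock.

(* For symmetric [phi] both sides are computed in coordinates. Since the strings
   of creation and annihilation operators in [W] collapse to symmetrizers (the
   normalisations multiply to [(m + k)!/m!]), the left side becomes
   [k! C(k+M, k) <(P_k e_x) ⊗ conj psi, P_(k+M) (phi ⊗ psi)>].  Expanding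
   [P_(k+M)] along its first slot and inducting on the length of the left factor
   splits this pairing according to the number [l] of slots of [phi] contracted
   with [e_x] rather than with [conj psi]; the [l]-th part is [C(k, l) C(M, k - l)]
   times a full contraction, which is also [1 / k!] times the corresponding
   coordinate of [T^l (gamma^(k-l)) phi].  Hence [C_l = C(k, l)]. *)

From Pilot Require Import Defs.
From HB Require Import structures.
From mathcomp Require Import all_boot all_order all_algebra all_fingroup all_field.
From mathcomp Require Import zify ring.
Set Implicit Arguments. Unset Strict Implicit. Unset Printing Implicit Defensive.
Import Order.TTheory GRing.Theory Num.Theory.
Local Open Scope ring_scope.

Lemma sum_indicator (R : pzSemiRingType) (T : finType) (t0 : T) (F : T -> R) :
  \sum_t (t == t0)%:R * F t = F t0.
Proof.
rewrite (bigD1 t0) //= eqxx mul1r big1 ?addr0 // => t /negbTE ->; exact: mul0r.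
Qed.

Lemma natr_fact_neq0 (R : numDomainType) n : (n`!%:R : R) != 0.
Proof. by rewrite pnatr_eq0 -lt0n fact_gt0. Qed.

Lemma sum_perm_const (R : pzSemiRingType) n (c : R) : \sum_(s : 'S_n) c = n`!%:R * c.
Proof. by rewrite sumr_const card_Sn mulr_natl. Qed.

Section TupleSums.
Variables (T : finType) (V : nmodType).
Local Notation tp n := (n.-tuple T).

Lemma sum_tuple0 (F : tp 0 -> V) : \sum_(t : tp 0) F t = F [tuple].
Proof.
by rewrite (big_pred1 [tuple]) // => t; apply/esym/eqP/val_inj; case: t => [[]].
Qed.

Lemma sum_tuple_cons n (F : seq T -> V) :
  \sum_(t : tp n.+1) F t = \sum_(c : T) \sum_(t : tp n) F (c :: t).
Proof.
rewrite pair_big /= (reindex (fun pr : T * tp n => cons_tuple pr.1 pr.2)) //=.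
exists (fun t : tp n.+1 => (thead t, behead_tuple t)) => [[c t] _ | t _] /=.
  by rewrite theadE; congr pair; apply: val_inj.
by rewrite [in RHS](tuple_eta t).
Qed.

Lemma sum_tuple_cat n a b (F : seq T -> V) : n = (a + b)%N ->
  \sum_(t : tp n) F t = \sum_(t1 : tp a) \sum_(t2 : tp b) F (t1 ++ t2).
Proof.
move=> ->; elim: a F => [|a IH] F.
  by rewrite (sum_tuple0 (fun t1 => \sum_(t2 : tp b) F (t1 ++ t2))).
rewrite (sum_tuple_cons (a + b) F).
rewrite (sum_tuple_cons a (fun t => \sum_(t2 : tp b) F (t ++ t2))).
apply: eq_bigr => c _.
exact: (IH (fun t => F (c :: t))).
Qed.

Lemma sum_tuple_cast a b (F : seq T -> V) : a = b ->
  \sum_(t : tp a) F t = \sum_(t : tp b) F t.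
Proof. by move=> ->. Qed.

End TupleSums.

Section Fock.
Variable N : nat.
Local Notation tp n := (n.-tuple 'I_N).

(** * Symmetrizer *)

Definition permt n (y : tp n) (s : 'S_n) : tp n := [tuple tnth y (s i) | i < n].

Lemma permtM n (y : tp n) s t : permt (permt y s) t = permt y (t * s)%g.
Proof. by apply: eq_from_tnth => i; rewrite !tnth_mktuple permM. Qed.

Lemma permt1 n (y : tp n) : permt y 1%g = y.
Proof. by apply: eq_from_tnth => i; rewrite !tnth_mktuple perm1. Qed.

Lemma perm_eq_permt n (y : tp n) s : perm_eq (permt y s) y.
Proof. by apply/tuple_permP; exists s. Qed.

Lemma eq_permtV n (x y : tp n) s : (x == permt y s) = (y == permt x s^-1).
Proof.
apply/eqP/eqP => [->|->]; by rewrite permtM ?mulgV ?mulVg permt1.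
Qed.

Lemma symTE n (x y : tp n) :
  symT x y = (n`!%:R)^-1 * \sum_(s : 'S_n) (x == permt y s)%:R.
Proof. by []. Qed.

Lemma symTC n (x y : tp n) : symT x y = symT y x.
Proof.
rewrite !symTE (reindex_inj invg_inj); congr (_ * _); apply: eq_bigr => s _.
by rewrite eq_permtV invgK.
Qed.

Lemma symT_permt n (x y : tp n) s : symT x (permt y s) = symT x y.
Proof.
rewrite !symTE (reindex_inj (mulIg s^-1)%g) /=; congr (_ * _).
by apply: eq_bigr => t _; rewrite permtM -mulgA mulVg mulg1.
Qed.

Lemma symE n (x y : tp n) : sym n x y = symT x y.
Proof. by rewrite /sym !valK. Qed.

Lemma sym_eq0l n (x y : seq 'I_N) : size x != n -> sym n x y = 0.
Proof.
rewrite /sym; case: insubP => [tx _ <-|//]; by rewrite size_tuple eqxx.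
Qed.

Lemma sym_eq0r n (x y : seq 'I_N) : size y != n -> sym n x y = 0.
Proof.
rewrite /sym; case: insubP => [tx _ _|//]; case: insubP => [ty _ <-|//].
by rewrite size_tuple eqxx.
Qed.

Lemma symC n (x y : seq 'I_N) : sym n x y = sym n y x.
Proof.
have [sx|sx] := boolP (size x == n); last by rewrite sym_eq0l // sym_eq0r.
have [sy|sy] := boolP (size y == n); last by rewrite sym_eq0r // sym_eq0l.
by rewrite -[x]/(val (Tuple sx)) -[y]/(val (Tuple sy)) !symE symTC.
Qed.

Lemma sym_perm_r n (x y y' : seq 'I_N) : perm_eq y y' -> sym n x y = sym n x y'.
Proof.
move=> pyy'; have sy' := perm_size pyy'.
have [sx|sx] := boolP (size x == n); last by rewrite !sym_eq0l.
have [sy|sy] := boolP (size y == n); last by rewrite !sym_eq0r // -sy'.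
have sy'n : size y' == n by rewrite -sy'.
rewrite -[x]/(val (Tuple sx)) -[y]/(val (Tuple sy)) -[y']/(val (Tuple sy'n)) !symE.
have /tuple_permP [s es] : perm_eq (Tuple sy) (Tuple sy'n) by [].
have -> : Tuple sy = permt (Tuple sy'n) s by apply: val_inj.
by rewrite symT_permt.
Qed.

Lemma sym_perm_l n (x x' y : seq 'I_N) : perm_eq x x' -> sym n x y = sym n x' y.
Proof. by move=> h; rewrite symC (sym_perm_r _ _ h) symC. Qed.

Lemma sym_conj n (x y : seq 'I_N) : (sym n x y)^* = sym n x y.
Proof.
rewrite /sym; case: insubP => [tx _ _|]; last by rewrite conjC0.
case: insubP => [ty _ _|]; last by rewrite conjC0.
rewrite symTE rmorphM fmorphV /= conjC_nat rmorph_sum /=; congr (_ * _).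
by apply: eq_bigr => s _; rewrite conjC_nat.
Qed.

Definition perm_inv n (f : seq 'I_N -> algC) :=
  forall y y', size y = n -> perm_eq y y' -> f y = f y'.

Lemma perm_inv_cons n (f : seq 'I_N -> algC) c :
  perm_inv n.+1 f -> perm_inv n (fun t => f (c :: t)).
Proof. by move=> h y y' sy pyy'; apply: h; rewrite /= ?sy // perm_cons. Qed.

Lemma perm_inv_sym n (x : seq 'I_N) : perm_inv n (sym n x).
Proof. by move=> y y' _; apply: sym_perm_r. Qed.

Lemma perm_inv_conj n (f : seq 'I_N -> algC) :
  perm_inv n f -> perm_inv n (fun w => (f w)^*).
Proof. by move=> h y y' s p; rewrite (h y y'). Qed.

Lemma symH_perm_inv n (f : vect N) : symH n f -> perm_inv n f.
Proof.
move=> h y y' sy pyy'.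
have sy1 : size y == n by rewrite sy.
have sy2 : size y' == n by rewrite -(perm_size pyy') sy.
rewrite -[y]/(val (Tuple sy1)) -[y']/(val (Tuple sy2)) -!h.
by apply: eq_bigr => t _; rewrite (sym_perm_l _ _ pyy').
Qed.

(* Both identities come from reindexing by [y = permt x s^-1]. *)
Lemma sym_fix n (f : seq 'I_N -> algC) : perm_inv n f ->
  forall x : tp n, \sum_(y : tp n) sym n x y * f y = f x.
Proof.
move=> hf x.
under eq_bigr => y _ do rewrite symE symTE -mulrA big_distrl /=.
rewrite -big_distrr /= exchange_big /=.
under eq_bigr => s _.
  under eq_bigr => y _ do rewrite eq_permtV.
  rewrite sum_indicator -(hf x (permt x s^-1)) ?size_tuple //; last first.
    by rewrite perm_sym perm_eq_permt.
over.
by rewrite sum_perm_const mulrA mulVf ?mul1r // natr_fact_neq0.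
Qed.

Lemma sym_absorb a n (u v : seq 'I_N) (w : tp n) :
  \sum_(t : tp n) sym (a + n) u (v ++ t) * sym n t w = sym (a + n) u (v ++ w).
Proof.
under eq_bigr => t _ do rewrite symE symTC symTE mulrCA big_distrr /=.
rewrite -big_distrr /= exchange_big /=.
under eq_bigr => s _.
  under eq_bigr => t _ do rewrite eq_permtV mulrC.
  rewrite sum_indicator (@sym_perm_r _ _ _ (v ++ w)); last first.
    by rewrite perm_cat2l perm_eq_permt.
over.
by rewrite sum_perm_const mulrA mulVf ?mul1r // natr_fact_neq0.
Qed.

Lemma sym_idem n (x y : seq 'I_N) :
  \sum_(t : tp n) sym n x t * sym n t y = sym n x y.
Proof.
have [sy|sy] := boolP (size y == n).
  by rewrite -[y]/(val (Tuple sy)) (@sym_absorb 0 n x [::] (Tuple sy)).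
by rewrite [RHS]sym_eq0r // big1 // => t _; rewrite [sym n t y]sym_eq0r ?mulr0.
Qed.

(** * Expansion of the symmetrizer along one slot *)

Definition del_nth (T : Type) (p : nat) (u : seq T) := take p u ++ drop p.+1 u.

Definition del_nth_tuple n (p : 'I_n.+1) (u : tp n.+1) : tp n :=
  [tuple tnth u (lift p k) | k < n].

Lemma del_nth_tupleE n p (u : tp n.+1) : val (del_nth_tuple p u) = del_nth p u.
Proof.
have x0 := tnth u p.
apply: (@eq_from_nth _ x0).
  rewrite size_tuple /del_nth size_cat size_take size_drop size_tuple ltn_ord.
  by case: p => /= p; lia.
move=> i; rewrite size_tuple => lti.
rewrite -[i]/(nat_of_ord (Ordinal lti)) -tnth_nth tnth_mktuple (tnth_nth x0) /=.
rewrite /del_nth nth_cat size_take size_tuple ltn_ord /bump.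
case: ltnP => hip; first by rewrite nth_take // leqNgt hip.
by rewrite nth_drop; congr nth; rewrite /=; lia.
Qed.

Lemma nth_del_nth_mid p (J1 J2 : seq 'I_N) d c :
  size J1 = p -> nth c (J1 ++ d :: J2) p = d /\ del_nth p (J1 ++ d :: J2) = J1 ++ J2.
Proof.
move=> s1; rewrite nth_cat /del_nth take_cat drop_cat s1 ltnn subnn take0 cats0.
by rewrite ltnNge leqnSn /= subSn // subnn; case: J2.
Qed.

Lemma del_nth_catl p (J z : seq 'I_N) :
  (p < size J)%N -> del_nth p (J ++ z) = del_nth p J ++ z.
Proof.
move=> h; rewrite /del_nth take_cat h -catA; congr (_ ++ _).
rewrite drop_cat; case: ltnP => // h2.
have e : size J = p.+1 by apply/eqP; rewrite eqn_leq h h2.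
by rewrite e subnn drop0 drop_oversize ?e.
Qed.

Lemma del_nth_catr q (J z : seq 'I_N) :
  del_nth (size J + q) (J ++ z) = J ++ del_nth q z.
Proof.
rewrite /del_nth take_cat drop_cat ltnNge leq_addr /= -addnS ltnNge leq_addr /=.
by rewrite !addKn catA.
Qed.

Lemma sum_perm_lift n (F : 'S_n.+1 -> algC) :
  \sum_(s : 'S_n.+1) F s = \sum_(p : 'I_n.+1) \sum_(s : 'S_n) F (lift_perm ord0 p s).
Proof.
rewrite (partition_big (fun s : 'S_n.+1 => s ord0) xpredT) //=.
apply: eq_bigr => j0 _; set i0 : 'I_n.+1 := ord0.
rewrite (reindex (lift_perm i0 j0)); last first.
  pose ulsf i (s : 'S_n.+1) k := odflt k (unlift (s i) (s (lift i k))).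
  have ulsfK i (s : 'S_n.+1) k : lift (s i) (ulsf i s k) = s (lift i k).
    rewrite /ulsf; have:= neq_lift i k.
    by rewrite -(can_eq (permK s)) => /unlift_some[] ? ? ->.
  have inj_ulsf : injective (ulsf i0 _).
    move=> s; apply: can_inj (ulsf (s i0) s^-1%g) _ => k'.
    by rewrite {1}/ulsf ulsfK !permK liftK.
  exists (fun s => perm (inj_ulsf s)) => [s _ | s].
    by apply/permP => k'; rewrite permE /ulsf lift_perm_lift lift_perm_id liftK.
  move/(s _ =P _) => si0; apply/permP => k.
  case: (unliftP i0 k) => [k'|] ->; rewrite ?lift_perm_id //.
  by rewrite lift_perm_lift -si0 permE ulsfK.
by apply: eq_big => [s | s _]; first by rewrite lift_perm_id eqxx.
Qed.

Lemma permt_lift n (u : tp n.+1) p s :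
  permt u (lift_perm ord0 p s) = cons_tuple (tnth u p) (permt (del_nth_tuple p u) s).
Proof.
apply: eq_from_tnth => i; case: (unliftP ord0 i) => [k|] ->.
  by rewrite tnthS !tnth_mktuple lift_perm_lift.
by rewrite tnth0 tnth_mktuple lift_perm_id.
Qed.

(* Expansion of [P_(n+1)] along its first slot: the letter [c] is sent to some
   position [p] of [u], and the remaining permutation is one of [n] letters. *)
Lemma sym_cons n c (v u : seq 'I_N) : size u = n.+1 ->
  n.+1%:R * sym n.+1 (c :: v) u =
  \sum_(0 <= p < n.+1) (nth c u p == c)%:R * sym n v (del_nth p u).
Proof.
move=> su; rewrite big_mkord.
have [sv|sv] := boolP (size v == n); last first.
  rewrite sym_eq0l ?mulr0 /=; last by rewrite eqSS.
  by rewrite big1 // => p _; rewrite sym_eq0l ?mulr0.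
have su' : size u == n.+1 by rewrite su.
pose tv := Tuple sv; pose tu := Tuple su'.
rewrite -[c :: v]/(val (cons_tuple c tv)) -[u]/(val tu) symE symTE sum_perm_lift.
rewrite mulrA factS natrM invfM mulrA mulfV ?mul1r ?pnatr_eq0 // big_distrr /=.
apply: eq_bigr => p _.
rewrite -[u]/(val tu) -(tnth_nth c tu p) -del_nth_tupleE -[v]/(val tv) symE symTE mulrCA.
congr (_ * _); rewrite big_distrr /=; apply: eq_bigr => s _.
rewrite permt_lift -natrM; congr (_%:R).
change ((c :: tv == tnth tu p :: permt (del_nth_tuple p tu) s) =
  ((tnth tu p == c) * (tv == permt (del_nth_tuple p tu) s))%N :> nat).
rewrite eqseq_cons [_ == tnth tu p]eq_sym.
by case: (tnth tu p == c); rewrite /= ?mul1n ?mul0n.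
Qed.

Lemma sum_del_nth k (Phi H : seq 'I_N -> algC) c : perm_inv k Phi ->
  \sum_(J : tp k) \sum_(0 <= p < k) (nth c J p == c)%:R * Phi J * H (del_nth p J) =
  k%:R * \sum_(J : tp k.-1) Phi (c :: J) * H J.
Proof.
move=> hPhi; rewrite exchange_big /=.
transitivity (\sum_(0 <= p < k) \sum_(J : tp k.-1) Phi (c :: J) * H J).
  2: by rewrite sumr_const_nat subn0 mulr_natl.
rewrite big_nat_cond [RHS]big_nat_cond; apply: eq_bigr => p /andP [/andP [_ pk] _].
rewrite (@sum_tuple_cat _ _ k p (k.-1 - p).+1
  (fun J => (nth c J p == c)%:R * Phi J * H (del_nth p J))); last by lia.
rewrite (@sum_tuple_cat _ _ k.-1 p (k.-1 - p) (fun J => Phi (c :: J) * H J)); last by lia.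
apply: eq_bigr => J1 _; rewrite (@sum_tuple_cons _ _ (k.-1 - p) (fun t =>
  (nth c (J1 ++ t) p == c)%:R * Phi (J1 ++ t) * H (del_nth p (J1 ++ t)))).
rewrite exchange_big /=.
apply: eq_bigr => J2 _.
under eq_bigr => d _.
  have [-> ->] := @nth_del_nth_mid p J1 J2 d c (size_tuple J1).
  rewrite -mulrA; over.
rewrite sum_indicator; congr (_ * _); apply: hPhi.
  by rewrite size_cat /= !size_tuple; lia.
by rewrite -cat1s perm_catCA.
Qed.

Lemma sym_cons_cat n k M c (v : seq 'I_N) (J : tp k) (z : tp M) : (k + M)%N = n.+1 ->
  n.+1%:R * sym n.+1 (c :: v) (J ++ z) =
  \sum_(0 <= p < k) (nth c J p == c)%:R * sym n v (del_nth p J ++ z) +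
  \sum_(0 <= q < M) (nth c z q == c)%:R * sym n v (J ++ del_nth q z).
Proof.
move=> en; rewrite sym_cons ?size_cat ?size_tuple // -en.
rewrite (big_cat_nat _ (leq_addr M k)) //=; congr (_ + _).
  rewrite big_nat_cond [RHS]big_nat_cond; apply: eq_bigr => p /andP [/andP [_ pk] _].
  by rewrite nth_cat size_tuple pk del_nth_catl // size_tuple.
rewrite -{1}[k]add0n big_addn addKn; apply: eq_bigr => q _.
rewrite nth_cat size_tuple ltnNge leq_addl /= addnK.
by rewrite (_ : (q + k)%N = size J + q) ?del_nth_catr // size_tuple addnC.
Qed.

(* The coordinate at [v] of the symmetrized tensor product [P_(k+M) (Phi ⊗ psi)]. *)
Definition sym_tensor k M (Phi psi : seq 'I_N -> algC) (v : seq 'I_N) :=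
  \sum_(J : tp k) \sum_(z : tp M) sym (k + M) v (J ++ z) * Phi J * psi z.

Lemma sym_tensor_cons k M Phi psi c v : perm_inv k Phi -> perm_inv M psi ->
  (k + M)%:R * sym_tensor k M Phi psi (c :: v) =
  k%:R * sym_tensor k.-1 M (fun J => Phi (c :: J)) psi v +
  M%:R * sym_tensor k M.-1 Phi (fun z => psi (c :: z)) v.
Proof.
move=> hPhi hpsi.
have [/eqP|] := eqVneq (k + M)%N 0%N.
  by rewrite addn_eq0 => /andP [/eqP -> /eqP ->]; rewrite !mul0r addr0.
rewrite -lt0n => /prednK en; set n := (k + M).-1 in en.
transitivity (\sum_(J : tp k) \sum_(z : tp M)
   (\sum_(0 <= p < k) (nth c J p == c)%:R * Phi J * (sym n v (del_nth p J ++ z) * psi z)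
  + \sum_(0 <= q < M) (nth c z q == c)%:R * psi z * (sym n v (J ++ del_nth q z) * Phi J))).
  rewrite /sym_tensor big_distrr /=; apply: eq_bigr => J _.
  rewrite big_distrr /=; apply: eq_bigr => z _.
  rewrite !mulrA -en sym_cons_cat // !mulrDl !mulr_suml.
  by congr (_ + _); apply: eq_bigr => i _; ring.
under eq_bigr => J _ do rewrite big_split /=.
rewrite big_split /=; congr (_ + _).
  under eq_bigr => J _ do rewrite exchange_big /=.
  under eq_bigr => J _ do under eq_bigr => p _ do rewrite -big_distrr /=.
  rewrite (sum_del_nth (fun J' => \sum_(z : tp M) sym n v (J' ++ z) * psi z) c hPhi).
  have [->|kpos] := posnP k; first by rewrite !mul0r.
  have -> : n = (k.-1 + M)%N by rewrite /n; lia.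
  congr (_ * _); apply: eq_bigr => J _; rewrite big_distrr; apply: eq_bigr => z _.
  by rewrite /=; ring.
rewrite exchange_big /=.
under eq_bigr => z _ do rewrite exchange_big /=.
under eq_bigr => z _ do under eq_bigr => q _ do rewrite -big_distrr /=.
rewrite (sum_del_nth (fun z' => \sum_(J : tp k) sym n v (J ++ z') * Phi J) c hpsi).
have [->|Mpos] := posnP M; first by rewrite !mul0r.
have -> : n = (k + M.-1)%N by rewrite /n; lia.
congr (_ * _); rewrite /sym_tensor [RHS]exchange_big; apply: eq_bigr => z _.
by rewrite big_distrr; apply: eq_bigr => J _; rewrite /=; ring.
Qed.

(** * Pairing against a symmetrized tensor product *)

(* [l] slots of [Phi] are filled from [eps] and [k - l] from [chi]; the remaining
   slots of [eps] and [chi] are matched with [psi]. *)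
Definition contraction p q k (eps chi Phi psi : seq 'I_N -> algC) l :=
  \sum_(a1 : tp l) \sum_(a2 : tp (p - l)) \sum_(b1 : tp (k - l))
  \sum_(b2 : tp (q - (k - l)))
    eps (a1 ++ a2) * chi (b1 ++ b2) * Phi (a1 ++ b1) * psi (a2 ++ b2).

Definition pairing p q k M (eps chi Phi psi : seq 'I_N -> algC) :=
  \sum_(I : tp p) \sum_(w : tp q) eps I * chi w * sym_tensor k M Phi psi (I ++ w).

Lemma contraction_cons_l p q k eps chi Phi psi l :
  \sum_(c : 'I_N) contraction p q k (fun t => eps (c :: t)) chi (fun t => Phi (c :: t)) psi l =
  contraction p.+1 q k.+1 eps chi Phi psi l.+1.
Proof.
by rewrite [RHS]/contraction (sum_tuple_cons l (fun a1 => \sum_(a2 : tp (p - l))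
  \sum_(b1 : tp (k - l)) \sum_(b2 : tp (q - (k - l)))
    eps (a1 ++ a2) * chi (b1 ++ b2) * Phi (a1 ++ b1) * psi (a2 ++ b2))).
Qed.

Lemma contraction_cons_r p q k eps chi Phi psi l : perm_inv p.+1 eps -> (l <= p)%N ->
  \sum_(c : 'I_N) contraction p q k (fun t => eps (c :: t)) chi Phi (fun t => psi (c :: t)) l =
  contraction p.+1 q k eps chi Phi psi l.
Proof.
move=> heps lp; rewrite /contraction exchange_big /=; apply: eq_bigr => a1 _.
set F := fun a2 : seq 'I_N => \sum_(b1 : tp (k - l)) \sum_(b2 : tp (q - (k - l)))
  eps (a1 ++ a2) * chi (b1 ++ b2) * Phi (a1 ++ b1) * psi (a2 ++ b2).
rewrite (@sum_tuple_cast _ _ (p.+1 - l) (p - l).+1 F) ?subSn // sum_tuple_cons /F.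
apply: eq_bigr => c _; apply: eq_bigr => a2 _; apply: eq_bigr => b1 _.
apply: eq_bigr => b2 _; congr (_ * _ * _ * _); apply: heps.
  by rewrite /= size_cat !size_tuple; lia.
by rewrite -cat1s perm_catCA.
Qed.

Lemma pairing_nil q k M eps chi Phi psi : q = (k + M)%N -> perm_inv q chi ->
  'C(k + M, k)%:R * pairing 0 q k M eps chi Phi psi =
  \sum_(l < k.+1) ('C(0, l) * 'C(q, k - l))%:R * contraction 0 q k eps chi Phi psi l.
Proof.
move=> -> hchi; rewrite big_ord_recl big1 ?addr0 => [|i _]; last first.
  by rewrite bin0n mul0n mul0r.
rewrite /= bin0 mul1n /contraction /pairing !subn0 addKn !sum_tuple0.
congr (_ * _); rewrite /sym_tensor /=.
under eq_bigr => w _ do rewrite big_distrr /=.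
rewrite exchange_big /=; apply: eq_bigr => J _.
under eq_bigr => w _ do rewrite big_distrr /=.
rewrite exchange_big /=; apply: eq_bigr => z _.
transitivity (eps [::] * Phi J * psi z *
  \sum_(w : tp (k + M)) sym (k + M) (J ++ z) w * chi w).
  by rewrite big_distrr /=; apply: eq_bigr => w _; rewrite symC; ring.
by rewrite (sym_fix hchi (cat_tuple J z)) /=; ring.
Qed.

Lemma pairing_cons p q k M eps chi Phi psi : perm_inv k Phi -> perm_inv M psi ->
  (k + M)%:R * pairing p.+1 q k M eps chi Phi psi =
  k%:R * \sum_(c : 'I_N)
    pairing p q k.-1 M (fun t => eps (c :: t)) chi (fun t => Phi (c :: t)) psi +
  M%:R * \sum_(c : 'I_N)
    pairing p q k M.-1 (fun t => eps (c :: t)) chi Phi (fun t => psi (c :: t)).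
Proof.
move=> hPhi hpsi; rewrite /pairing (sum_tuple_cons p (fun I =>
  \sum_(w : tp q) eps I * chi w * sym_tensor k M Phi psi (I ++ w))).
rewrite !big_distrr -big_split /=; apply: eq_bigr => c _.
rewrite !big_distrr -big_split /=; apply: eq_bigr => I _.
rewrite !big_distrr -big_split /=; apply: eq_bigr => w _.
rewrite mulrCA sym_tensor_cons //; ring.
Qed.

Lemma sum_binS p q k (X : nat -> algC) :
  \sum_(l < k.+1) ('C(p.+1, l) * 'C(q, k - l))%:R * X l =
  \sum_(l < k) ('C(p, l) * 'C(q, k - l.+1))%:R * X l.+1 +
  \sum_(l < k.+1) ('C(p, l) * 'C(q, k - l))%:R * X l.
Proof.
rewrite big_ord_recl [X in _ = _ + X]big_ord_recl /= !bin0 addrCA; congr (_ + _).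
rewrite -big_split /=; apply: eq_bigr => i _.
by rewrite /bump /= binS mulnDl natrD mulrDl addrC.
Qed.

(* Expanding [P_(k+M)] classifies permutations by how many of the [k] slots of
   [Phi] are filled from [eps] rather than from [chi]. *)
Lemma pairing_expansion p : forall q k M eps chi Phi psi, (p + q = k + M)%N ->
  perm_inv p eps -> perm_inv q chi -> perm_inv k Phi -> perm_inv M psi ->
  'C(k + M, k)%:R * pairing p q k M eps chi Phi psi =
  \sum_(l < k.+1) ('C(p, l) * 'C(q, k - l))%:R * contraction p q k eps chi Phi psi l.
Proof.
elim: p => [|p IH] q k M eps chi Phi psi hpq heps hchi hPhi hpsi.
  exact: pairing_nil.
pose eps_ c t := eps (c :: t).
have hA : 'C(k + M, k)%:R * k%:R * \sum_(c : 'I_N)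
      pairing p q k.-1 M (eps_ c) chi (fun t => Phi (c :: t)) psi =
    (k + M)%:R * \sum_(l < k) ('C(p, l) * 'C(q, k - l.+1))%:R *
      contraction p.+1 q k eps chi Phi psi l.+1.
  case: k hpq hPhi => [|k] hpq hPhi; first by rewrite big_ord0 mulr0 mul0r mulr0.
  rewrite -natrM mulnC -mul_bin_diag natrM -mulrA big_distrr /=; congr (_ * _).
  transitivity (\sum_(c : 'I_N) \sum_(l < k.+1) ('C(p, l) * 'C(q, k - l))%:R *
      contraction p q k (eps_ c) chi (fun t => Phi (c :: t)) psi l).
    apply: eq_bigr => c _; apply: IH => //; try exact: perm_inv_cons.
    by move: hpq; rewrite !addSn => -[].
  rewrite exchange_big /=; apply: eq_bigr => l _.
  by rewrite -big_distrr contraction_cons_l subSS.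
have hB : 'C(k + M, k)%:R * M%:R * \sum_(c : 'I_N)
      pairing p q k M.-1 (eps_ c) chi Phi (fun t => psi (c :: t)) =
    (k + M)%:R * \sum_(l < k.+1) ('C(p, l) * 'C(q, k - l))%:R *
      contraction p.+1 q k eps chi Phi psi l.
  case: M hpq hpsi {hA} => [|M] hpq hpsi.
    rewrite mulr0 mul0r big1 ?mulr0 // => l _.
    have [pl|lp] := ltnP p l; first by rewrite bin_small ?mul0n ?mul0r.
    by rewrite (@bin_small q (k - l)) ?muln0 ?mul0r //; lia.
  have binM : (M.+1 * 'C(k + M.+1, k) = (k + M.+1) * 'C(k + M, k))%N.
    by rewrite -{1}(addKn k M.+1) -mul_bin_down addnS.
  rewrite -natrM mulnC binM natrM -mulrA big_distrr /=; congr (_ * _).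
  transitivity (\sum_(c : 'I_N) \sum_(l < k.+1) ('C(p, l) * 'C(q, k - l))%:R *
      contraction p q k (eps_ c) chi Phi (fun t => psi (c :: t)) l).
    apply: eq_bigr => c _; apply: IH => //; try exact: perm_inv_cons.
    by move: hpq; rewrite addSn addnS => -[].
  rewrite exchange_big /=; apply: eq_bigr => l _.
  have [lp|pl] := leqP l p; first by rewrite -big_distrr /= contraction_cons_r.
  by rewrite bin_small // mul0n !mul0r big1 // => c _; rewrite mul0r.
have nz : (k + M)%:R != 0 :> algC by rewrite pnatr_eq0; lia.
apply: (mulfI nz); rewrite mulrCA pairing_cons // mulrDr !mulrA hA hB.
by rewrite -mulrDr sum_binS.
Qed.

(** * Strings of creation and annihilation operators *)

Lemma An_adjoint (I : seq 'I_N) m w u : An I m w u = (Cr I m u w)^*.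
Proof.
elim: I m w u => [|i I IH] m w u /=; first by rewrite /idk conjC_nat eq_sym.
rewrite /Defs.comp rmorph_sum /=; apply: eq_bigr => y _.
by rewrite rmorphM /= IH /an mulrC.
Qed.

(* [a^*] raising level [m] carries the factor [sqrt (m + 1)]; this is the product
   of these factors over [k] successive creations starting at level [m]. *)
Fixpoint cr_norm (m k : nat) : algC :=
  if k is k'.+1 then sqrtC m.+1%:R * cr_norm m.+1 k' else 1.

Lemma cr_norm_conj m k : (cr_norm m k)^* = cr_norm m k.
Proof.
elim: k m => [|k IH] m /=; first by rewrite conjC1.
rewrite rmorphM /= IH; congr (_ * _); apply/conj_Creal/ger0_real.
by rewrite sqrtC_ge0 ler0n.
Qed.

Lemma cr_norm_sqr m k : cr_norm m k * cr_norm m k * m`!%:R = (m + k)`!%:R.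
Proof.
elim: k m => [|k IH] m /=; first by rewrite !mul1r addn0.
transitivity (sqrtC m.+1%:R ^+ 2 * (cr_norm m.+1 k * cr_norm m.+1 k * m`!%:R)).
  by rewrite /=; ring.
by rewrite sqrtCK mulrCA -natrM -factS IH addSnnS.
Qed.

Lemma cr_norm_sqr_bin M k : cr_norm M k * cr_norm M k = k`!%:R * 'C(k + M, k)%:R.
Proof.
apply: (mulIf (natr_fact_neq0 algC M)); rewrite cr_norm_sqr -!natrM; congr (_%:R).
by rewrite addnC -(bin_fact (leq_addr M k)) addKn mulnCA mulnA.
Qed.

Lemma apply_Cr (J : seq 'I_N) m (f : seq 'I_N -> algC) (u : seq 'I_N) : perm_inv m f ->
  apply m (Cr J m) f u =
  cr_norm m (size J) * \sum_(z : tp m) sym (m + size J) u (J ++ z) * f z.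
Proof.
elim: J m f => [|j J IH] m f hf /=.
  rewrite mul1r addn0 /apply /idk.
  have [su|su] := boolP (size u == m).
    rewrite -[u]/(val (Tuple su)) (sym_fix hf).
    under eq_bigr => y _ do rewrite eq_sym.
    exact: (sum_indicator (Tuple su) (fun y : tp m => f y)).
  rewrite big1 => [|y _]; last first.
    by case: eqP => [e|]; rewrite ?mul0r //; move: su; rewrite e size_tuple eqxx.
  by rewrite big1 // => z _; rewrite sym_eq0l ?mul0r.
pose g t := \sum_(y : tp m) ad j m t y * f y.
have hg : perm_inv m.+1 g.
  move=> t t' _ ptt'; apply: eq_bigr => y _; congr (_ * _).
  by rewrite /ad (sym_perm_l _ _ ptt').
transitivity (apply m.+1 (Cr J m.+1) g u).
  rewrite /apply /g /Defs.comp.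
  under eq_bigr => y _ do rewrite big_distrl /=.
  rewrite exchange_big /=; apply: eq_bigr => t _.
  by rewrite big_distrr /=; apply: eq_bigr => y _; rewrite mulrA.
rewrite IH // [sqrtC _ * _]mulrC -mulrA; congr (_ * _).
rewrite /g /=; under eq_bigr => t _ do rewrite big_distrr /=.
rewrite exchange_big [RHS]big_distrr /=; apply: eq_bigr => y _.
transitivity (sqrtC m.+1%:R * f y *
  \sum_(t : tp m.+1) sym (size J + m.+1) u (J ++ t) * sym m.+1 t (j :: y)).
  by rewrite big_distrr /=; apply: eq_bigr => t _; rewrite /ad addnC; ring.
rewrite (@sym_absorb (size J) m.+1 u J (cons_tuple j y)) /= !addnS addnC.
rewrite (@sym_perm_r _ _ (J ++ j :: y) (j :: J ++ y)); first by ring.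
by rewrite -cat1s perm_catCA.
Qed.

Lemma symHE n (f : vect N) : symH n f ->
  forall x : tp n, \sum_(y : tp n) sym n x y * f y = f x.
Proof. by []. Qed.

Lemma trH_proj M (psi : vect N) (B : kern N) : symH M psi ->
  trH M (Defs.comp M (proj psi) B) =
  \sum_(w : tp M) \sum_(z : tp M) (psi w)^* * B w z * psi z.
Proof.
move=> h; pose Y (c : seq 'I_N) := \sum_(w : tp M) (psi w)^* * B w c.
rewrite /trH /tr /Defs.comp /proj.
transitivity (\sum_(a : tp M) \sum_(c : tp M)
   (\sum_(b : tp M) sym M a b * psi b) * Y c * sym M c a).
  apply: eq_bigr => a _; under eq_bigr => b _ do rewrite big_distrr /=.
  rewrite exchange_big /=; apply: eq_bigr => c _.
  rewrite /Y big_distrl big_distrl /=; apply: eq_bigr => b _.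
  by rewrite !big_distrl !big_distrr !big_distrl /=; apply: eq_bigr => w _; ring.
under eq_bigr => a _ do under eq_bigr => c _ do rewrite (symHE h).
rewrite exchange_big /=.
transitivity (\sum_(c : tp M) Y c * \sum_(a : tp M) sym M c a * psi a).
  by apply: eq_bigr => c _; rewrite big_distrr /=; apply: eq_bigr => a _; ring.
transitivity (\sum_(c : tp M) Y c * psi c).
  by apply: eq_bigr => c _; rewrite (symHE h).
by rewrite /Y exchange_big; apply: eq_bigr => w _; rewrite big_distrl.
Qed.

Lemma trH_proj_An_Cr M k (psi : vect N) (i j : tp k) : symH M psi ->
  trH M (Defs.comp M (proj psi) (Defs.comp (M + k) (An i M) (Cr j M))) =
  cr_norm M k * cr_norm M k * \sum_(w : tp M) \sum_(z : tp M)
    (psi w)^* * psi z * sym (M + k) (i ++ w) (j ++ z).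
Proof.
move=> h; have hs := symH_perm_inv h.
rewrite trH_proj //.
transitivity (\sum_(u : tp (M + k)) (apply M (Cr i M) psi u)^* * apply M (Cr j M) psi u).
  rewrite /Defs.comp.
  transitivity (\sum_(w : tp M) \sum_(z : tp M) \sum_(u : tp (M + k))
     (psi w)^* * An i M w u * (Cr j M u z * psi z)).
    apply: eq_bigr => w _; apply: eq_bigr => z _.
    by rewrite big_distrr big_distrl /=; apply: eq_bigr => u _; ring.
  under eq_bigr => w _ do rewrite exchange_big /=.
  rewrite exchange_big /=; apply: eq_bigr => u _.
  rewrite /apply rmorph_sum /= big_distrl /=; apply: eq_bigr => w _.
  rewrite big_distrr /=; apply: eq_bigr => z _.
  by rewrite An_adjoint rmorphM /=; ring.
transitivity (\sum_(u : tp (M + k)) cr_norm M k * cr_norm M k *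
  \sum_(w : tp M) \sum_(z : tp M)
    (psi w)^* * psi z * (sym (M + k) (i ++ w) u * sym (M + k) u (j ++ z))).
  apply: eq_bigr => u _.
  rewrite !apply_Cr // !size_tuple rmorphM /= cr_norm_conj rmorph_sum /=.
  rewrite -!mulrA; congr (_ * _); rewrite mulrCA; congr (_ * _).
  rewrite big_distrl /=; apply: eq_bigr => w _.
  rewrite big_distrr /=; apply: eq_bigr => z _.
  by rewrite rmorphM /= sym_conj (symC _ u); ring.
rewrite -big_distrr /=; congr (_ * _).
rewrite exchange_big /=; apply: eq_bigr => w _.
rewrite exchange_big /=; apply: eq_bigr => z _.
by rewrite -big_distrr /= sym_idem.
Qed.

Lemma Cr_vacuum (J : seq 'I_N) u :
  Cr J 0 u [::] = cr_norm 0 (size J) * sym (size J) u J.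
Proof.
have := @apply_Cr J 0 (fun _ => 1) u; rewrite /apply !sum_tuple0 /= cats0 !mulr1.
by apply.
Qed.

Lemma comp_Cr_An_vacuum k (i j : tp k) x y :
  Defs.comp 0 (Cr (rev i) 0) (An (rev j) 0) x y =
  k`!%:R * sym k x i * sym k y j.
Proof.
rewrite /Defs.comp sum_tuple0 An_adjoint !Cr_vacuum !size_rev !size_tuple.
have -> : k`!%:R = cr_norm 0 k * cr_norm 0 k :> algC.
  by rewrite -[RHS]mulr1 (cr_norm_sqr 0 k).
rewrite rmorphM /= cr_norm_conj sym_conj.
rewrite (@sym_perm_r k x (rev i) i) ?perm_rev // (@sym_perm_r k y (rev j) j) ?perm_rev //.
by rewrite /=; ring.
Qed.

Lemma W_proj_apply M k (psi phi : vect N) (x : tp k) : symH M psi -> symH k phi ->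
  apply k (W M k (proj psi)) phi x =
  k`!%:R * ('C(k + M, k)%:R * pairing k M k M (sym k x) (fun w => (psi w)^*) phi psi).
Proof.
move=> hpsi hphi.
pose Tr (i j : tp k) :=
  trH M (Defs.comp M (proj psi) (Defs.comp (M + k) (An i M) (Cr j M))).
transitivity (\sum_(i : tp k) \sum_(j : tp k) Tr i j * sym k x i * phi j).
  rewrite /apply /W.
  transitivity (\sum_(y : tp k) \sum_(i : tp k) \sum_(j : tp k)
     Tr i j * sym k x i * (sym k y j * phi y)).
    apply: eq_bigr => y _; rewrite big_distrr big_distrl /=; apply: eq_bigr => i _.
    rewrite big_distrr big_distrl /=; apply: eq_bigr => j _.
    by rewrite comp_Cr_An_vacuum /Tr; field; exact: natr_fact_neq0.
  rewrite exchange_big /=; apply: eq_bigr => i _.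
  rewrite exchange_big /=; apply: eq_bigr => j _.
  rewrite -big_distrr /= -[in RHS](symHE hphi j); congr (_ * _).
  by apply: eq_bigr => y _; rewrite symC.
under eq_bigr => i _ do under eq_bigr => j _ do
  rewrite /Tr trH_proj_An_Cr // cr_norm_sqr_bin.
rewrite mulrA /pairing big_distrr /=; apply: eq_bigr => i _.
transitivity (\sum_(j : tp k) \sum_(w : tp M) \sum_(z : tp M)
  k`!%:R * 'C(k + M, k)%:R *
  (sym k x i * (psi w)^* * (sym (k + M) (i ++ w) (j ++ z) * phi j * psi z))).
  apply: eq_bigr => j _.
  set S := \sum_(w : tp M) \sum_(z : tp M) _.
  transitivity (k`!%:R * 'C(k + M, k)%:R * (S * (sym k x i * phi j))); first by ring.
  rewrite /S big_distrl big_distrr /=; apply: eq_bigr => w _.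
  rewrite big_distrl big_distrr /=; apply: eq_bigr => z _.
  by rewrite addnC; ring.
rewrite exchange_big /= big_distrr /=; apply: eq_bigr => w _.
rewrite /sym_tensor !big_distrr /=; apply: eq_bigr => j _.
by rewrite !big_distrr /=; apply: eq_bigr => z _; ring.
Qed.

(** * Reduced density matrices *)

Lemma gammaE M j (psi : vect N) (u v : tp j) : (j <= M)%N ->
  gamma M j psi u v =
  (M ^_ j)%:R * \sum_(r : tp (M - j)) psi (u ++ r) * (psi (v ++ r))^*.
Proof.
move=> jM; have eM : M = (j + (M - j))%N by rewrite subnKC.
rewrite /gamma; congr (_ * _).
transitivity (\sum_(w1 : tp j) (w1 == u)%:R * \sum_(w2 : tp (M - j))
  \sum_(z1 : tp j) (z1 == v)%:R * \sum_(z2 : tp (M - j))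
    (z2 == w2)%:R * (psi (w1 ++ w2) * (psi (z1 ++ z2))^*)).
  rewrite (@sum_tuple_cat _ _ M j (M - j) (fun w => \sum_(z : tp M)
    ((take j w == u) && (take j z == v) && (drop j w == drop j z))%:R
    * psi w * (psi z)^*)) //.
  apply: eq_bigr => w1 _; rewrite big_distrr /=; apply: eq_bigr => w2 _.
  rewrite (@sum_tuple_cat _ _ M j (M - j) (fun z =>
    ((take j (w1 ++ w2) == u) && (take j z == v) && (drop j (w1 ++ w2) == drop j z))%:R
    * psi (w1 ++ w2) * (psi z)^*)) //.
  rewrite big_distrr /=; apply: eq_bigr => z1 _.
  rewrite !big_distrr /=; apply: eq_bigr => z2 _.
  rewrite !take_size_cat ?size_tuple // !drop_size_cat ?size_tuple //.
  rewrite -[tval w1 == tval u]/(w1 == u) -[tval z1 == tval v]/(z1 == v).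
  rewrite -[tval w2 == tval z2]/(w2 == z2) [w2 == z2]eq_sym -!mulnb !natrM.
  by ring.
rewrite sum_indicator; apply: eq_bigr => w2 _.
by rewrite sum_indicator sum_indicator.
Qed.

Lemma tensI_gamma_contraction M k l (psi phi : vect N) (x : tp k) : (l <= k)%N ->
  \sum_(a : tp k) \sum_(b : tp k) sym k x a * tensI l (gamma M (k - l) psi) a b * phi b =
  (M ^_ (k - l))%:R * contraction k M k (sym k x) (fun w => (psi w)^*) phi psi l.
Proof.
move=> lk; have ek : k = (l + (k - l))%N by rewrite subnKC.
have [jM|Mj] := leqP (k - l) M; last first.
  rewrite ffact_small // mul0r big1 // => a _; rewrite big1 // => b _.
  by rewrite /tensI /gamma ffact_small // mul0r !mulr0 mul0r.
rewrite (@sum_tuple_cat _ _ k l (k - l) (fun a => \sum_(b : tp k)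
   sym k x a * tensI l (gamma M (k - l) psi) a b * phi b)) //.
rewrite /contraction big_distrr /=; apply: eq_bigr => a1 _.
rewrite big_distrr /=; apply: eq_bigr => a2 _.
rewrite (@sum_tuple_cat _ _ k l (k - l) (fun b =>
   sym k x (a1 ++ a2) * tensI l (gamma M (k - l) psi) (a1 ++ a2) b * phi b)) //.
transitivity (\sum_(b1 : tp l) (b1 == a1)%:R * \sum_(b2 : tp (k - l))
    sym k x (a1 ++ a2) * gamma M (k - l) psi a2 b2 * phi (b1 ++ b2)).
  apply: eq_bigr => b1 _; rewrite big_distrr /=; apply: eq_bigr => b2 _.
  rewrite /tensI !take_size_cat ?size_tuple // !drop_size_cat ?size_tuple //.
  by rewrite -[tval a1 == tval b1]/(a1 == b1) eq_sym; ring.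
rewrite sum_indicator big_distrr /=; apply: eq_bigr => b2 _.
rewrite gammaE // mulrCA -mulrA big_distrr big_distrl !big_distrr /=.
by apply: eq_bigr => r _; ring.
Qed.

Lemma apply_sum_scale n m (c : 'I_m -> algC) (F : 'I_m -> kern N) phi x :
  apply n (fun u v => \sum_(l < m) c l * F l u v) phi x =
  \sum_(l < m) c l * apply n (F l) phi x.
Proof.
rewrite /apply; under eq_bigr => y _ do rewrite big_distrl /=.
rewrite exchange_big /=; apply: eq_bigr => l _.
by rewrite big_distrr /=; apply: eq_bigr => y _; rewrite mulrA.
Qed.

Lemma T_gamma_apply M k l (psi phi : vect N) (x : tp k) : (l <= k)%N -> symH k phi ->
  apply k (T k l (gamma M (k - l) psi)) phi x =
  k`!%:R * 'C(M, k - l)%:R * contraction k M k (sym k x) (fun w => (psi w)^*) phi psi l.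
Proof.
move=> lk hphi; set G := gamma M (k - l) psi.
transitivity (k`!%:R / (k - l)`!%:R *
    \sum_(a : tp k) \sum_(b : tp k) sym k x a * tensI l G a b * phi b).
  rewrite /apply /T /Defs.comp.
  transitivity (k`!%:R / (k - l)`!%:R * \sum_(a : tp k) \sum_(b : tp k)
      sym k x a * tensI l G a b * \sum_(y : tp k) sym k b y * phi y).
    rewrite big_distrr /=.
    transitivity (\sum_(y : tp k) \sum_(a : tp k) \sum_(b : tp k)
      k`!%:R / (k - l)`!%:R * (sym k x a * tensI l G a b * (sym k b y * phi y))).
      apply: eq_bigr => y _; rewrite big_distrr big_distrl /=; apply: eq_bigr => a _.
      by rewrite big_distrr big_distrr big_distrl /=; apply: eq_bigr => b _; ring.
    rewrite exchange_big /=; apply: eq_bigr => a _.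
    rewrite exchange_big big_distrr /=; apply: eq_bigr => b _.
    by rewrite big_distrr big_distrr /=; apply: eq_bigr => y _; ring.
  by congr (_ * _); apply: eq_bigr => a _; apply: eq_bigr => b _; rewrite symHE.
rewrite tensI_gamma_contraction // -(bin_ffact M (k - l)) natrM.
by field; exact: natr_fact_neq0.
Qed.

End Fock.

Unset Implicit Arguments.

Theorem mainTheorem5 (N M k : nat) (hN : (2 <= N)%N) (hM : (1 <= M)%N) :
  exists C : 'I_k.+1 -> algC,
    (forall l, 0 < C l) /\
    forall psi : vect N, unitH M psi ->
    forall phi : vect N, symH k phi ->
    forall x : k.-tuple 'I_N,
      apply k (W M k (proj psi)) phi x =
      apply k (fun u v => \sum_(l < k.+1) C l * T k l (gamma M (k - l) psi) u v) phi x.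
Proof.
exists (fun l => 'C(k, l)%:R); split => [l | psi [hpsi _] phi hphi x].
  by rewrite ltr0n bin_gt0 -ltnS ltn_ord.
have psi_inv := symH_perm_inv hpsi.
rewrite W_proj_apply // pairing_expansion //; last first.
- exact: symH_perm_inv.
- exact: perm_inv_conj.
- exact: perm_inv_sym.
rewrite apply_sum_scale big_distrr /=; apply: eq_bigr => l _.
rewrite T_gamma_apply ?natrM; [ring | by rewrite -ltnS ltn_ord | done].
Qed.
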